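(* Let $m\ge1$ and consider a preferential (dynamic) attachment circuit of index $m$. For $0\le j\le n$ let $D^{(m)}_{n,j}$ be the degree (indegree plus outdegree, edges counted with multiplicity) of node $j$ at time $n$. Then for $n\ge j$, $$\mathbb{E}\bigl[D^{(m)}_{n,j}\bigr]=\frac{\Gamma(n+1)\,\Gamma\bigl(j+\frac1{m+1}\bigr)}{\Gamma\bigl(n+\frac1{m+1}\bigr)\,\Gamma(j+1)}-1+m(1-\delta_{j,0}),$$ and $$\mathbb{V}\mathrm{ar}\bigl[D^{(m)}_{n,j}\bigr]=\frac{\Gamma(n+1)}{((m+1)j+1)\,\Gamma^2\bigl(n+\frac1{m+1}\bigr)\,\Gamma^2(j+1)\,\Gamma\bigl(n+\frac2{m+1}\bigr)}\times\Bigl\{2((m+1)n+1)\,\Gamma(j+1)\,\Gamma^2\bigl(n+\tfrac1{m+1}\bigr)\,\Gamma\bigl(j+\tfrac2{m+1}\bigr)$$ $$-((m+1)j+1)\Bigl[\Gamma(n+1)\,\Gamma\bigl(n+\tfrac2{m+1}\bigr)\,\Gamma^2\bigl(j+\tfrac1{m+1}\bigr)+\Gamma\bigl(n+\tfrac2{m+1}\bigr)\,\Gamma\bigl(n+\tfrac1{m+1}\bigr)\,\Gamma(j+1)\,\Gamma\bigl(j+\tfrac1{m+1}\bigr)\Bigr]\Bigr\}.$$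
   Context: Preferential (dynamic) attachment circuit of index $m\ge1$: at time $0$ there is a single node labeled $0$. At each time $n\ge1$ a new node labeled $n$ is added and $m$ parents are chosen for it one at a time, with replacement, among nodes $0,\dots,n-1$. Before the $(i+1)$-th choice ($i=0,\dots,m-1$), each existing node $v$ is chosen with probability $\frac{d_i(v)+1}{\sum_{x}(d_i(x)+1)}$, where $d_i(x)$ is the outdegree of $x$ in the current multigraph including the edges created by the first $i$ choices for node $n$; after each choice an edge from the chosen parent to node $n$ is immediately added (multi-edges allowed). $\delta_{j,0}$ is the Kronecker delta. *)

From Stdlib Require Import Reals List Arith.
From Coquelicot Require Import Coquelicot.
Import ListNotations.
Open Scope R_scope.

Definition Gamma (x : R) : R :=
  RInt_gen (fun t => Rpower t (x - 1) * exp (- t)) (at_right 0) (Rbar_locally p_infty).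

(* A multigraph is represented by its list of edges (parent, child),
   multi-edges being repeated entries. *)
Definition graph := list (nat * nat).

Definition outdeg (E : graph) (x : nat) : nat :=
  length (filter (fun e => Nat.eqb (fst e) x) E).

Definition degree (E : graph) (j : nat) : nat :=
  length (filter (fun e => Nat.eqb (fst e) j) E) +
  length (filter (fun e => Nat.eqb (snd e) j) E).

(* A finitely supported probability law on graphs: list of (probability, outcome). *)
Definition dist := list (R * graph).

Definition choose_step (n : nat) (D : dist) : dist :=
  flat_map (fun pE =>
    let p := fst pE in let E := snd pE in
    let W := fold_right Nat.add 0%nat (map (fun x => S (outdeg E x)) (seq 0 n)) in
    map (fun v => (p * (INR (S (outdeg E v)) / INR W), (v, n) :: E)) (seq 0 n))
  D.

Fixpoint pa_law (m n : nat) : dist :=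
  match n with
  | O => [(1, [])]
  | S k => Nat.iter m (choose_step (S k)) (pa_law m k)
  end.

Definition expect (D : dist) (f : graph -> R) : R :=
  fold_right Rplus 0 (map (fun pE => fst pE * f (snd pE)) D).

Definition mean_deg (m n j : nat) : R :=
  expect (pa_law m n) (fun E => INR (degree E j)).

Definition var_deg (m n j : nat) : R :=
  expect (pa_law m n) (fun E => (INR (degree E j) - mean_deg m n j) ^ 2).

Definition kdelta (a b : nat) : R := if Nat.eqb a b then 1 else 0.

(* Let X = 1 + outdeg j be the attachment weight of node j.  While node k + 1 receives its
   parents, the total weight of the graph is (k + 1) + #edges, which is deterministic, so one
   parent choice picks j with probability X / W and maps E[X] to (1 + 1/W) E[X] and
   E[X (X + 1)] to (1 + 2/W) E[X (X + 1)].  Over the m choices of one time step these factors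
   telescope to (k + 1) / (k + a) and (k + 1) (k + 1 + a) / ((k + a) (k + b)), with
   a = 1 / (m + 1) and b = 2 / (m + 1), and Gamma (x + 1) = x Gamma x turns the products over
   j <= k < n into Gamma ratios.  The indegree m (1 - delta_{j,0}) of j is deterministic, so
   the degree is X - 1 + m (1 - delta_{j,0}) and its variance is
   E[X (X + 1)] - E[X] - E[X]^2. *)

From Pilot Require Import Defs.
From Stdlib Require Import Reals Lra Lia List Classical_Prop.
From Coquelicot Require Import Coquelicot.
Open Scope R_scope.

(** * The Gamma integral *)

Definition Gamma_integrand (x t : R) : R := Rpower t (x - 1) * exp (- t).

Lemma exp_le_1 x : x <= 0 -> exp x <= 1.
Proof.
  intros [Hx | ->]; [| rewrite exp_0; lra].
  rewrite <- exp_0; left; now apply exp_increasing.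
Qed.

Lemma Gamma_integrand_continuous x t : 0 < t -> continuous (Gamma_integrand x) t.
Proof.
  intros Ht. apply (@ex_derive_continuous R_AbsRing R_NormedModule).
  unfold Gamma_integrand, Rpower. auto_derive. lra.
Qed.

Lemma Gamma_integrand_pos x t : 0 < t -> 0 < Gamma_integrand x t.
Proof. intros; apply Rmult_lt_0_compat; apply exp_pos. Qed.

Lemma ex_RInt_Gamma_integrand x a b : 0 < a -> 0 < b -> ex_RInt (Gamma_integrand x) a b.
Proof.
  intros Ha Hb. apply (@ex_RInt_continuous R_CompleteNormedModule).
  intros t Ht. apply Gamma_integrand_continuous.
  assert (0 < Rmin a b) by now apply Rmin_glb_lt. lra.
Qed.

Lemma RInt_Gamma_integrand_Chasles x a b c : 0 < a -> 0 < b -> 0 < c ->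
  RInt (Gamma_integrand x) a b + RInt (Gamma_integrand x) b c = RInt (Gamma_integrand x) a c.
Proof.
  intros. apply (@RInt_Chasles R_CompleteNormedModule); now apply ex_RInt_Gamma_integrand.
Qed.

Lemma RInt_Gamma_integrand_ge0 x a b : 0 < a -> a <= b -> 0 <= RInt (Gamma_integrand x) a b.
Proof.
  intros. apply RInt_ge_0; auto.
  - apply ex_RInt_Gamma_integrand; lra.
  - intros t Ht. left. apply Gamma_integrand_pos. lra.
Qed.

(* Near 0 the integrand is at most t^(c-1), whose integral over [a, 1] is (1 - a^c) / c. *)
Lemma RInt_Gamma_integrand_le_inv c a : 0 < c -> 0 < a <= 1 ->
  RInt (Gamma_integrand c) a 1 <= / c.
Proof.
  intros Hc Ha.
  assert (Hprim : is_RInt (fun t => Rpower t (c - 1)) a 1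
                    (minus (Rpower 1 c / c) (Rpower a c / c))).
  { apply (@is_RInt_derive R_CompleteNormedModule (fun t => Rpower t c / c));
      intros t Ht; rewrite Rmin_left, Rmax_right in Ht by lra.
    - unfold Rpower. auto_derive; [lra |].
      replace ((c - 1) * ln t) with (c * ln t + - ln t) by ring.
      rewrite exp_plus, exp_Ropp, exp_ln by lra. field. lra.
    - apply (@ex_derive_continuous R_AbsRing R_NormedModule).
      unfold Rpower. auto_derive. lra. }
  apply Rle_trans with (RInt (fun t => Rpower t (c - 1)) a 1).
  - apply RInt_le; [lra | apply ex_RInt_Gamma_integrand; lra | eexists; exact Hprim |].
    intros t Ht. unfold Gamma_integrand.
    rewrite <- (Rmult_1_r (Rpower t (c - 1))) at 2.
    apply Rmult_le_compat_l; [left; apply exp_pos | apply exp_le_1; lra].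
  - rewrite (is_RInt_unique _ _ _ _ Hprim).
    unfold minus, plus, opp, Rpower at 1; simpl. rewrite ln_1, Rmult_0_r, exp_0.
    assert (0 < Rpower a c / c) by (apply Rdiv_lt_0_compat; [apply exp_pos | lra]).
    unfold Rdiv in *. lra.
Qed.

(* Beyond 1 the integrand is at most e^(-t) when c <= 1. *)
Lemma RInt_Gamma_integrand_le_1 c b : c <= 1 -> 1 <= b ->
  RInt (Gamma_integrand c) 1 b <= 1.
Proof.
  intros Hc Hb.
  assert (Hprim : is_RInt (fun t => exp (- t)) 1 b (minus (- exp (- b)) (- exp (- 1)))).
  { apply (@is_RInt_derive R_CompleteNormedModule (fun t => - exp (- t))); intros t Ht.
    - auto_derive; auto. ring.
    - apply (@ex_derive_continuous R_AbsRing R_NormedModule). auto_derive. auto. }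
  apply Rle_trans with (RInt (fun t => exp (- t)) 1 b).
  - apply RInt_le; [lra | apply ex_RInt_Gamma_integrand; lra | eexists; exact Hprim |].
    intros t Ht. unfold Gamma_integrand.
    rewrite <- (Rmult_1_l (exp (- t))) at 2.
    apply Rmult_le_compat_r; [left; apply exp_pos | apply exp_le_1].
    assert (0 <= ln t) by (rewrite <- ln_1; apply ln_le; lra). nra.
  - rewrite (is_RInt_unique _ _ _ _ Hprim). unfold minus, plus, opp; simpl.
    assert (0 < exp (- b)) by apply exp_pos.
    assert (exp (- 1) <= 1) by (apply exp_le_1; lra). lra.
Qed.

Lemma RInt_Gamma_integrand_bounded c a b : 0 < c <= 1 -> 0 < a <= b ->
  RInt (Gamma_integrand c) a b <= / c + 1.
Proof.
  intros Hc Hab.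
  set (a' := Rmin a 1). set (b' := Rmax b 1).
  assert (0 < a' <= a /\ a' <= 1) by (unfold a'; repeat split;
    [apply Rmin_glb_lt; lra | apply Rmin_l | apply Rmin_r]).
  assert (b <= b' /\ 1 <= b') by (unfold b'; split; [apply Rmax_l | apply Rmax_r]).
  pose proof (RInt_Gamma_integrand_Chasles c a' a b).
  pose proof (RInt_Gamma_integrand_Chasles c a' b b').
  pose proof (RInt_Gamma_integrand_Chasles c a' 1 b').
  pose proof (RInt_Gamma_integrand_ge0 c a' a).
  pose proof (RInt_Gamma_integrand_ge0 c b b').
  pose proof (RInt_Gamma_integrand_le_inv c a').
  pose proof (RInt_Gamma_integrand_le_1 c b').
  intuition lra.
Qed.

(* The integrals over [a, b] increase with the interval and are bounded, so they converge to
   their supremum. *)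
Lemma Gamma_integral_converges_unit c : 0 < c <= 1 -> exists L, 0 < L /\
  is_RInt_gen (Gamma_integrand c) (at_right 0) (Rbar_locally p_infty) L.
Proof.
  intros Hc.
  set (I := fun y => exists a b, 0 < a <= b /\ y = RInt (Gamma_integrand c) a b).
  assert (HI : bound I).
  { exists (/ c + 1). intros y [a [b [Hab ->]]]. now apply RInt_Gamma_integrand_bounded. }
  assert (HI12 : I (RInt (Gamma_integrand c) 1 2)) by (exists 1, 2; split; [lra | auto]).
  destruct (completeness I HI (ex_intro _ _ HI12)) as [L [HLub HLleast]].
  assert (H12 : 0 < RInt (Gamma_integrand c) 1 2).
  { apply RInt_gt_0; [lra | |]; intros; [apply Gamma_integrand_pos | apply Gamma_integrand_continuous]; lra. }
  exists L. split; [apply Rlt_le_trans with (2 := HLub _ HI12); lra |].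
  intros P [eps HP].
  assert (Hnear : exists a0 b0, 0 < a0 <= b0 /\ L - eps < RInt (Gamma_integrand c) a0 b0).
  { apply NNPP. intros Hn.
    assert (Hub : is_upper_bound I (L - eps)).
    { intros y [a [b [Hab ->]]]. apply Rnot_lt_le. intros Hlt. apply Hn. now exists a, b. }
    specialize (HLleast _ Hub). destruct eps; simpl in *. lra. }
  destruct Hnear as [a0 [b0 [Hab0 Hlt]]].
  apply Filter_prod with (fun a => 0 < a <= a0) (fun b => b0 <= b).
  - exists (mkposreal a0 (proj1 Hab0)). intros a Ha Ha0.
    change (Rabs (a - 0) < a0) in Ha. rewrite Rminus_0_r, Rabs_right in Ha; lra.
  - exists b0. intros; lra.
  - intros a b Ha Hb. exists (RInt (Gamma_integrand c) a b). split.
    + apply (@RInt_correct R_CompleteNormedModule), ex_RInt_Gamma_integrand; lra.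
    + apply HP. change (Rabs (RInt (Gamma_integrand c) a b - L) < eps).
      pose proof (RInt_Gamma_integrand_Chasles c a a0 b).
      pose proof (RInt_Gamma_integrand_Chasles c a0 b0 b).
      pose proof (RInt_Gamma_integrand_ge0 c a a0).
      pose proof (RInt_Gamma_integrand_ge0 c b0 b).
      assert (RInt (Gamma_integrand c) a b <= L) by (apply HLub; exists a, b; split; [lra | auto]).
      apply Rabs_def1; intuition lra.
Qed.

Definition Gamma_boundary (x t : R) : R := - (Rpower t x * exp (- t)).

Lemma is_derive_Gamma_boundary x t : 0 < t ->
  is_derive (Gamma_boundary x) t (Gamma_integrand (x + 1) t - x * Gamma_integrand x t).
Proof.
  intros Ht. unfold Gamma_boundary, Gamma_integrand, Rpower. auto_derive; [lra |].
  replace (x + 1 - 1) with x by ring.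
  replace ((x - 1) * ln t) with (x * ln t + - ln t) by ring.
  rewrite exp_plus, (exp_Ropp (ln t)), exp_ln by lra. field. lra.
Qed.

Lemma Gamma_boundary_at_0 x : 0 < x -> filterlim (Gamma_boundary x) (at_right 0) (locally 0).
Proof.
  intros Hx P [eps HP].
  assert (Hd : 0 < Rpower eps (/ x)) by apply exp_pos.
  exists (mkposreal _ Hd). intros t Ht Ht0. apply HP.
  change (Rabs (t - 0) < Rpower eps (/ x)) in Ht. rewrite Rminus_0_r, Rabs_right in Ht by lra.
  change (Rabs (Gamma_boundary x t - 0) < eps).
  unfold Gamma_boundary. rewrite Rminus_0_r, Rabs_Ropp, Rabs_right
    by (left; apply Rmult_lt_0_compat; apply exp_pos).
  assert (Hpow : Rpower t x < Rpower (Rpower eps (/ x)) x) by (apply Rlt_Rpower_l; lra).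
  rewrite Rpower_mult, Rinv_l, Rpower_1 in Hpow by (destruct eps; simpl; lra).
  assert (exp (- t) <= 1) by (apply exp_le_1; lra).
  assert (0 < Rpower t x) by apply exp_pos.
  assert (0 < exp (- t)) by apply exp_pos.
  nra.
Qed.

(* At infinity, [x ln t < t / 2] eventually since [ln t / t -> 0]. *)
Lemma Gamma_boundary_at_infty x : 0 < x ->
  filterlim (Gamma_boundary x) (Rbar_locally p_infty) (locally 0).
Proof.
  intros Hx P [eps HP].
  assert (Hr : 0 < / (2 * x)) by (apply Rinv_0_lt_compat; lra).
  destruct (is_lim_div_ln_p (ball 0 (mkposreal _ Hr))) as [M HM]; [now exists (mkposreal _ Hr) |].
  exists (Rmax M (Rmax 1 (- 2 * ln eps))). intros t Ht.
  assert (HtM : M < t /\ 1 < t /\ - 2 * ln eps < t).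
  { revert Ht. generalize (Rmax_l M (Rmax 1 (- 2 * ln eps))) (Rmax_r M (Rmax 1 (- 2 * ln eps)))
      (Rmax_l 1 (- 2 * ln eps)) (Rmax_r 1 (- 2 * ln eps)). lra. }
  destruct HtM as [HtM [Ht1 Hteps]].
  specialize (HM t HtM). change (Rabs (ln t / t - 0) < / (2 * x)) in HM. rewrite Rminus_0_r in HM.
  apply Rabs_def2 in HM. destruct HM as [HM _].
  assert (Hln : x * ln t < t / 2).
  { apply (Rmult_lt_compat_l (2 * x * t)) in HM; [| nra].
    replace (2 * x * t * (ln t / t)) with (2 * (x * ln t)) in HM by (field; lra).
    replace (2 * x * t * / (2 * x)) with t in HM by (field; lra). lra. }
  apply HP. change (Rabs (Gamma_boundary x t - 0) < eps). unfold Gamma_boundary, Rpower.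
  rewrite Rminus_0_r, Rabs_Ropp, <- exp_plus, Rabs_right by (left; apply exp_pos).
  destruct eps as [e He]; simpl in *.
  rewrite <- (exp_ln e) by auto. apply exp_increasing. lra.
Qed.

Lemma is_RInt_gen_Gamma_integrand_succ x L : 0 < x ->
  is_RInt_gen (Gamma_integrand x) (at_right 0) (Rbar_locally p_infty) L ->
  is_RInt_gen (Gamma_integrand (x + 1)) (at_right 0) (Rbar_locally p_infty) (x * L).
Proof.
  intros Hx HL.
  assert (Hpos : filter_prod (at_right 0) (Rbar_locally p_infty)
                   (fun ab => 0 < Rmin (fst ab) (snd ab))).
  { apply Filter_prod with (fun a => 0 < a) (fun b => 0 < b).
    - exists (mkposreal 1 Rlt_0_1). intros; auto.
    - exists 0. intros; auto.
    - intros; simpl. now apply Rmin_glb_lt. }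
  assert (HD : is_RInt_gen (Derive (Gamma_boundary x)) (at_right 0) (Rbar_locally p_infty) (0 - 0)).
  { apply is_RInt_gen_Derive.
    - eapply filter_imp; [| exact Hpos]. intros [a b] Hab t Ht; simpl in *.
      eexists. apply is_derive_Gamma_boundary. lra.
    - eapply filter_imp; [| exact Hpos]. intros [a b] Hab t Ht; simpl in *.
      apply continuous_ext_loc with (fun t => Gamma_integrand (x + 1) t - x * Gamma_integrand x t).
      + assert (Ht0 : 0 < t) by lra. exists (mkposreal t Ht0). intros y Hy.
        change (Rabs (y - t) < t) in Hy. apply Rabs_def2 in Hy.
        symmetry. apply is_derive_unique, is_derive_Gamma_boundary. lra.
      + apply (@ex_derive_continuous R_AbsRing R_NormedModule).
        unfold Gamma_integrand, Rpower. auto_derive. lra.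
    - now apply Gamma_boundary_at_0.
    - now apply Gamma_boundary_at_infty. }
  pose proof (is_RInt_gen_scal (Fa := at_right 0) (Fb := Rbar_locally p_infty) _ x _ HL) as HS.
  pose proof (is_RInt_gen_plus (Fa := at_right 0) (Fb := Rbar_locally p_infty) _ _ _ _ HS HD) as HP.
  replace (x * L) with (plus (scal x L) (0 - 0))
    by (unfold plus, scal; simpl; unfold mult; simpl; ring).
  eapply is_RInt_gen_ext; [| exact HP].
  eapply filter_imp; [| exact Hpos]. intros [a b] Hab t Ht; simpl in *.
  rewrite (is_derive_unique _ _ _ (is_derive_Gamma_boundary x t ltac:(lra))).
  unfold plus, scal; simpl; unfold mult; simpl; ring.
Qed.

Lemma Gamma_integral_converges x : 0 < x -> exists L, 0 < L /\
  is_RInt_gen (Gamma_integrand x) (at_right 0) (Rbar_locally p_infty) L.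
Proof.
  intros Hx. destruct (INR_unbounded x) as [k Hk].
  revert x Hx Hk. induction k as [| k IH]; intros x Hx Hk.
  - apply Gamma_integral_converges_unit. simpl in Hk. lra.
  - destruct (Rle_lt_dec x 1) as [Hx1 | Hx1]; [now apply Gamma_integral_converges_unit |].
    rewrite S_INR in Hk. destruct (IH (x - 1)) as [L [HL HI]]; [lra | lra |].
    exists ((x - 1) * L). split; [nra |].
    replace x with (x - 1 + 1) at 1 by ring.
    apply is_RInt_gen_Gamma_integrand_succ; [lra | exact HI].
Qed.

Lemma Gamma_is_RInt_gen x L :
  is_RInt_gen (Gamma_integrand x) (at_right 0) (Rbar_locally p_infty) L -> Gamma x = L.
Proof.
  apply (@is_RInt_gen_unique R_CompleteNormedModule).
  - apply Proper_StrongProper, at_right_proper_filter.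
  - apply Proper_StrongProper, Rbar_locally_filter.
Qed.

Lemma Gamma_pos x : 0 < x -> 0 < Gamma x.
Proof.
  intros Hx. destruct (Gamma_integral_converges x Hx) as [L [HL HI]].
  now rewrite (Gamma_is_RInt_gen _ _ HI).
Qed.

Lemma Gamma_succ x : 0 < x -> Gamma (x + 1) = x * Gamma x.
Proof.
  intros Hx. destruct (Gamma_integral_converges x Hx) as [L [HL HI]].
  rewrite (Gamma_is_RInt_gen _ _ HI).
  exact (Gamma_is_RInt_gen _ _ (is_RInt_gen_Gamma_integrand_succ x L Hx HI)).
Qed.

Lemma Gamma_nat_succ x k : 0 < x -> Gamma (INR (S k) + x) = (INR k + x) * Gamma (INR k + x).
Proof.
  intros Hx. replace (INR (S k) + x) with (INR k + x + 1) by (rewrite S_INR; ring).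
  apply Gamma_succ. pose proof (pos_INR k). lra.
Qed.

Lemma Gamma_nat_pos x k : 0 < x -> 0 < Gamma (INR k + x).
Proof. intros Hx. apply Gamma_pos. pose proof (pos_INR k). lra. Qed.

Lemma Gamma_ratio_telescope (u : nat -> R) x y j : 0 < x -> 0 < y ->
  (forall k, (j <= k)%nat -> u (S k) = (INR k + x) / (INR k + y) * u k) ->
  forall n, (j <= n)%nat ->
  u n = u j * (Gamma (INR n + x) * Gamma (INR j + y)) / (Gamma (INR n + y) * Gamma (INR j + x)).
Proof.
  intros Hx Hy Hu n Hn.
  pose proof (Gamma_nat_pos x j Hx). pose proof (Gamma_nat_pos y j Hy).
  induction Hn as [| n Hn IH].
  - field. lra.
  - pose proof (Gamma_nat_pos x n Hx). pose proof (Gamma_nat_pos y n Hy). pose proof (pos_INR n).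
    rewrite Hu, IH, !Gamma_nat_succ by auto. field. repeat split; lra.
Qed.

(** * Expectations under finite laws *)

Definition supported (D : Defs.dist) (Q : graph -> Prop) : Prop := forall pE, In pE D -> Q (snd pE).

Lemma expect_app D1 D2 f : expect (D1 ++ D2) f = expect D1 f + expect D2 f.
Proof. induction D1 as [| pE D1 IH]; unfold expect in *; simpl; [ring | rewrite IH; ring]. Qed.

Lemma expect_plus D f g : expect D (fun E => f E + g E) = expect D f + expect D g.
Proof. induction D as [| pE D IH]; unfold expect in *; simpl; [ring | rewrite IH; ring]. Qed.

Lemma expect_scal D c f : expect D (fun E => c * f E) = c * expect D f.
Proof. induction D as [| pE D IH]; unfold expect in *; simpl; [ring | rewrite IH; ring]. Qed.

Lemma expect_ext_supported D Q f g : supported D Q -> (forall E, Q E -> f E = g E) ->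
  expect D f = expect D g.
Proof.
  intros HD Hfg. induction D as [| pE D IH]; [reflexivity |].
  unfold expect in *; simpl.
  rewrite Hfg, IH by (try intros ? ?; apply HD; simpl; auto). reflexivity.
Qed.

Lemma supported_choose_step n D (Q Q' : graph -> Prop) : supported D Q ->
  (forall E v, Q E -> (v < n)%nat -> Q' ((v, n) :: E)) -> supported (choose_step n D) Q'.
Proof.
  intros HD HQ pE Hin. apply in_flat_map in Hin. destruct Hin as [[p E] [HinD Hin]].
  apply in_map_iff in Hin. destruct Hin as [v [<- Hv]]. apply in_seq in Hv.
  apply HQ; [exact (HD _ HinD) | lia].
Qed.

Definition list_sumR (l : list R) : R := fold_right Rplus 0 l.

Lemma list_sumR_plus {A} (l : list A) f g :
  list_sumR (map (fun v => f v + g v) l) = list_sumR (map f l) + list_sumR (map g l).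
Proof. induction l as [| v l IH]; simpl; [ring | rewrite IH; ring]. Qed.

Lemma list_sumR_scal {A} (l : list A) c f :
  list_sumR (map (fun v => c * f v) l) = c * list_sumR (map f l).
Proof. induction l as [| v l IH]; simpl; [ring | rewrite IH; ring]. Qed.

Lemma list_sumR_const {A} (l : list A) c : list_sumR (map (fun _ => c) l) = c * INR (length l).
Proof. induction l as [| v l IH]; simpl length; rewrite ?S_INR; simpl; [ring | rewrite IH; ring]. Qed.

Lemma list_sumR_INR {A} (l : list A) h :
  list_sumR (map (fun v => INR (h v)) l) = INR (list_sum (map h l)).
Proof. induction l as [| v l IH]; simpl; [reflexivity | rewrite IH, plus_INR; reflexivity]. Qed.

Lemma kdelta_sym a b : kdelta a b = kdelta b a.
Proof. unfold kdelta. now rewrite Nat.eqb_sym. Qed.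

Lemma list_sumR_kdelta (l : list nat) w j :
  list_sumR (map (fun v => w v * kdelta v j) l) = w j * INR (count_occ Nat.eq_dec l j).
Proof.
  induction l as [| v l IH]; simpl; [ring |]. rewrite IH. unfold kdelta.
  destruct (Nat.eq_dec v j) as [-> | Hvj].
  - rewrite Nat.eqb_refl, S_INR. ring.
  - rewrite (proj2 (Nat.eqb_neq v j) Hvj). ring.
Qed.

Lemma count_occ_seq s n j : (s <= j < s + n)%nat -> count_occ Nat.eq_dec (seq s n) j = 1%nat.
Proof. intros Hj. apply NoDup_count_occ'; [apply seq_NoDup | apply in_seq; lia]. Qed.

Lemma outdeg_cons e E x : INR (outdeg (e :: E) x) = kdelta (fst e) x + INR (outdeg E x).
Proof. unfold outdeg, kdelta. simpl. destruct (Nat.eqb (fst e) x); simpl length; rewrite ?S_INR; ring. Qed.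

Lemma list_sumR_outdeg E n : (forall e, In e E -> (fst e < n)%nat) ->
  list_sumR (map (fun x => INR (outdeg E x)) (seq 0 n)) = INR (length E).
Proof.
  induction E as [| e E IH]; intros HE.
  - rewrite (list_sumR_const _ 0). simpl. ring.
  - rewrite (map_ext _ _ (outdeg_cons e E)), list_sumR_plus, IH by (intros; apply HE; simpl; auto).
    rewrite (map_ext _ (fun x => 1 * kdelta x (fst e))) by (intros; rewrite kdelta_sym; ring).
    rewrite list_sumR_kdelta, count_occ_seq by (specialize (HE e (or_introl eq_refl)); lia).
    cbn [length]. rewrite (S_INR (length E)). change (INR 1) with 1. ring.
Qed.

(* The normalising constant used by [choose_step]. *)
Definition total_weight (E : graph) (n : nat) : nat :=
  list_sum (map (fun x => S (outdeg E x)) (seq 0 n)).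

Lemma INR_total_weight E n : (forall e, In e E -> (fst e < n)%nat) ->
  INR (total_weight E n) = INR n + INR (length E).
Proof.
  intros HE. unfold total_weight. rewrite <- list_sumR_INR.
  rewrite (map_ext _ (fun x => 1 + INR (outdeg E x))) by (intros; rewrite S_INR; ring).
  rewrite list_sumR_plus, list_sumR_const, list_sumR_outdeg, length_seq by exact HE. ring.
Qed.

Lemma expect_map_weighted (l : list nat) p (w : nat -> R) (h : nat -> graph) f :
  expect (map (fun v => (p * w v, h v)) l) f = p * list_sumR (map (fun v => w v * f (h v)) l).
Proof. induction l as [| v l IH]; unfold expect in *; simpl; [ring | rewrite IH; ring]. Qed.

Lemma expect_choose_step n D f :
  expect (choose_step n D) f =
  expect D (fun E => list_sumR (map (fun v =>
    INR (S (outdeg E v)) / INR (total_weight E n) * f ((v, n) :: E)) (seq 0 n))).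
Proof.
  induction D as [| [p E] D IH]; [reflexivity |].
  change (choose_step n ((p, E) :: D)) with
    (map (fun v => (p * (INR (S (outdeg E v)) / INR (total_weight E n)), (v, n) :: E)) (seq 0 n)
     ++ choose_step n D).
  rewrite expect_app, IH, expect_map_weighted. reflexivity.
Qed.

(* A parent choice for node [n] picks [j] with probability [(1 + outdeg j) / W], where the total
   weight [W = n + #edges] does not depend on the choices made so far. *)
Lemma expect_choose_step_increment n j D f g :
  (j < n)%nat ->
  supported D (fun E => forall e, In e E -> (fst e < n)%nat) ->
  (forall E v, f ((v, n) :: E) = f E + g E * kdelta v j) ->
  expect (choose_step n D) f =
  expect D (fun E => f E + g E * INR (S (outdeg E j)) / (INR n + INR (length E))).
Proof.
  intros Hj HD Hf. rewrite expect_choose_step. apply (expect_ext_supported _ _ _ _ HD).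
  intros E HE. set (w := fun v => INR (S (outdeg E v))).
  assert (HW : list_sumR (map w (seq 0 n)) = INR (total_weight E n)) by apply list_sumR_INR.
  rewrite (map_ext _ (fun v => / INR (total_weight E n) * f E * w v
                               + / INR (total_weight E n) * g E * (w v * kdelta v j)))
    by (intros v; rewrite Hf; unfold Rdiv; fold (w v); ring).
  rewrite list_sumR_plus, !list_sumR_scal, HW, list_sumR_kdelta, count_occ_seq by lia.
  rewrite INR_total_weight by exact HE.
  assert (0 < INR n) by (apply lt_0_INR; lia). pose proof (pos_INR (length E)).
  unfold w. change (INR 1) with 1. field. lra.
Qed.

(** * The attachment weight of a node *)

(* Law of the graph at time [k] after [i] of the [m] parent choices of node [k + 1]; the last
   of these is [pa_law m (S k)] itself. *)
Definition pa_partial (m k i : nat) : Defs.dist := Nat.iter i (choose_step (S k)) (pa_law m k).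

Definition indeg (E : graph) (j : nat) : nat := length (filter (fun e => Nat.eqb (snd e) j) E).

Definition indeg_profile (m k i j : nat) : nat :=
  if Nat.eqb j 0 then 0 else if Nat.leb j k then m else if Nat.eqb j (S k) then i else 0.

(* The deterministic features of a graph in the support of [pa_partial m k i]. *)
Record pa_shape (m k i : nat) (E : graph) : Prop := {
  pa_shape_length : length E = (m * k + i)%nat;
  pa_shape_edge : forall e, In e E -> (fst e < snd e <= k + Nat.min i 1)%nat;
  pa_shape_indeg : forall j, indeg E j = indeg_profile m k i j }.

Lemma pa_shape_choose m k i E v : pa_shape m k i E -> (v < S k)%nat ->
  pa_shape m k (S i) ((v, S k) :: E).
Proof.
  intros [Hlen Hedge Hin] Hv. split.
  - simpl. lia.
  - intros e [<- | He]; simpl; [lia |]. specialize (Hedge e He). lia.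
  - intros j. specialize (Hin j). unfold indeg, indeg_profile in *. cbn [filter snd].
    destruct (Nat.eqb_spec (S k) j) as [<- | Hj]; cbn [length]; rewrite Hin.
    + replace (Nat.eqb (S k) 0) with false by reflexivity.
      rewrite (proj2 (Nat.leb_gt (S k) k)), Nat.eqb_refl by lia. reflexivity.
    + destruct (Nat.eqb j 0), (Nat.leb j k); auto.
      now rewrite (proj2 (Nat.eqb_neq j (S k))) by auto.
Qed.

Lemma pa_shape_next m k E : pa_shape m k m E -> pa_shape m (S k) 0 E.
Proof.
  intros [Hlen Hedge Hin]. split.
  - lia.
  - intros e He. specialize (Hedge e He). lia.
  - intros j. rewrite Hin. unfold indeg_profile.
    destruct (Nat.eqb j 0); auto.
    destruct (Nat.leb_spec j k); [rewrite (proj2 (Nat.leb_le j (S k))) by lia; auto |].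
    destruct (Nat.eqb_spec j (S k)) as [-> | Hj]; [now rewrite Nat.leb_refl |].
    rewrite (proj2 (Nat.leb_gt j (S k))) by lia.
    destruct (Nat.eqb j (S (S k))); auto.
Qed.

Lemma supported_pa_partial_of_law m k i : supported (pa_law m k) (pa_shape m k 0) ->
  supported (pa_partial m k i) (pa_shape m k i).
Proof.
  intros H0. induction i as [| i IH]; [exact H0 |].
  apply (supported_choose_step _ _ _ _ IH). intros; now apply pa_shape_choose.
Qed.

Lemma supported_pa_law m k : supported (pa_law m k) (pa_shape m k 0).
Proof.
  induction k as [| k IH].
  - intros pE [<- | []]. split; simpl; [lia | intros e [] |].
    intros [| [| j]]; reflexivity.
  - intros pE Hin. apply pa_shape_next, (supported_pa_partial_of_law m k m IH pE Hin).
Qed.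

Lemma supported_pa_partial m k i : supported (pa_partial m k i) (pa_shape m k i).
Proof. apply supported_pa_partial_of_law, supported_pa_law. Qed.

Definition attach_weight (j : nat) (E : graph) : R := INR (S (outdeg E j)).

Definition attach_weight2 (j : nat) (E : graph) : R := attach_weight j E * (attach_weight j E + 1).

Lemma attach_weight_cons j v n E :
  attach_weight j ((v, n) :: E) = attach_weight j E + 1 * kdelta v j.
Proof. unfold attach_weight. rewrite !S_INR, outdeg_cons. simpl. ring. Qed.

Lemma attach_weight2_cons j v n E :
  attach_weight2 j ((v, n) :: E) = attach_weight2 j E + 2 * (attach_weight j E + 1) * kdelta v j.
Proof.
  unfold attach_weight2. rewrite attach_weight_cons. unfold kdelta.
  destruct (Nat.eqb v j); ring.
Qed.

(* Total weight [(k + 1) + #edges] at the start of the choices for node [k + 1]. *)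
Definition base_weight (m k : nat) : R := (INR m + 1) * INR k + 1.

Lemma base_weight_pos m k : 0 < base_weight m k.
Proof. unfold base_weight. pose proof (pos_INR m). pose proof (pos_INR k). nra. Qed.

Lemma expect_pa_partial_succ m k i j f g : (j <= k)%nat ->
  (forall E v, f ((v, S k) :: E) = f E + g E * kdelta v j) ->
  expect (pa_partial m k (S i)) f =
  expect (pa_partial m k i) f
  + expect (pa_partial m k i) (fun E => g E * attach_weight j E) / (base_weight m k + INR i).
Proof.
  intros Hj Hf. change (pa_partial m k (S i)) with (choose_step (S k) (pa_partial m k i)).
  rewrite (expect_choose_step_increment _ j _ f g); [| lia | | exact Hf].
  2: { intros pE Hin e He. pose proof (pa_shape_edge _ _ _ _ (supported_pa_partial m k i pE Hin) e He).
       lia. }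
  unfold Rdiv. rewrite Rmult_comm, <- expect_scal, <- expect_plus.
  apply (expect_ext_supported _ _ _ _ (supported_pa_partial m k i)).
  intros E HE. replace (INR (S k) + INR (length E)) with (base_weight m k + INR i).
  - unfold attach_weight. ring.
  - rewrite (pa_shape_length _ _ _ _ HE), plus_INR, mult_INR, (S_INR k). unfold base_weight. ring.
Qed.

Lemma expect_pa_partial_mass m k i :
  expect (pa_partial m k i) (fun _ => 1) = expect (pa_law m k) (fun _ => 1).
Proof.
  induction i as [| i IH]; [reflexivity |].
  rewrite (expect_pa_partial_succ m k i 0 _ (fun _ => 0)), IH by (try lia; intros; ring).
  rewrite (expect_scal _ 0 (attach_weight 0)). field.
  pose proof (base_weight_pos m k). pose proof (pos_INR i). lra.
Qed.

Lemma pa_law_mass m n : expect (pa_law m n) (fun _ => 1) = 1.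
Proof.
  induction n as [| k IH]; [unfold expect; simpl; ring |].
  exact (eq_trans (expect_pa_partial_mass m k m) IH).
Qed.

Lemma expect_attach_weight_partial m k i j : (j <= k)%nat ->
  expect (pa_partial m k i) (attach_weight j) =
  expect (pa_law m k) (attach_weight j) * (base_weight m k + INR i) / base_weight m k.
Proof.
  intros Hj. pose proof (base_weight_pos m k).
  induction i as [| i IH]; [simpl; field; lra |].
  rewrite (expect_pa_partial_succ m k i j _ (fun _ => 1)) by (auto; intros; apply attach_weight_cons).
  rewrite (expect_scal _ 1), Rmult_1_l, IH, S_INR.
  pose proof (pos_INR i). field. lra.
Qed.

Lemma expect_attach_weight2_partial m k i j : (j <= k)%nat ->
  expect (pa_partial m k i) (attach_weight2 j) =
  expect (pa_law m k) (attach_weight2 j) * ((base_weight m k + INR i) * (base_weight m k + INR i + 1))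
  / (base_weight m k * (base_weight m k + 1)).
Proof.
  intros Hj. pose proof (base_weight_pos m k).
  induction i as [| i IH]; [simpl; field; lra |].
  rewrite (expect_pa_partial_succ m k i j _ (fun E => 2 * (attach_weight j E + 1)))
    by (auto; intros; apply attach_weight2_cons).
  rewrite (expect_ext_supported _ _ (fun E => 2 * (attach_weight j E + 1) * attach_weight j E)
             (fun E => 2 * attach_weight2 j E) (supported_pa_partial m k i))
    by (intros; unfold attach_weight2; ring).
  rewrite expect_scal, IH, S_INR.
  pose proof (pos_INR i). field. lra.
Qed.

Lemma expect_attach_weight_succ m k j : (j <= k)%nat ->
  expect (pa_law m (S k)) (attach_weight j) =
  (INR k + 1) / (INR k + 1 / (INR m + 1)) * expect (pa_law m k) (attach_weight j).
Proof.
  intros Hj. change (pa_law m (S k)) with (pa_partial m k m).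
  rewrite expect_attach_weight_partial by exact Hj.
  unfold base_weight. pose proof (pos_INR m). pose proof (pos_INR k).
  field. repeat split; nra.
Qed.

Lemma expect_attach_weight2_succ m k j : (j <= k)%nat ->
  expect (pa_law m (S k)) (attach_weight2 j) / (INR (S k) + 1 / (INR m + 1)) =
  (INR k + 1) / (INR k + 2 / (INR m + 1))
  * (expect (pa_law m k) (attach_weight2 j) / (INR k + 1 / (INR m + 1))).
Proof.
  intros Hj. change (pa_law m (S k)) with (pa_partial m k m).
  rewrite expect_attach_weight2_partial, S_INR by exact Hj.
  unfold base_weight. pose proof (pos_INR m). pose proof (pos_INR k).
  field. repeat split; nra.
Qed.

Lemma outdeg_newest m k E : pa_shape m k 0 E -> outdeg E k = 0%nat.
Proof.
  intros HE. unfold outdeg. rewrite (filter_ext_in _ (fun _ => false)), filter_false; [reflexivity |].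
  intros e He. pose proof (pa_shape_edge _ _ _ _ HE e He).
  apply Nat.eqb_neq. simpl in *. lia.
Qed.

Lemma expect_attach_weight_birth m j : expect (pa_law m j) (attach_weight j) = 1.
Proof.
  rewrite <- (pa_law_mass m j). apply (expect_ext_supported _ _ _ _ (supported_pa_law m j)).
  intros E HE. unfold attach_weight. now rewrite (outdeg_newest _ _ _ HE).
Qed.

Lemma expect_attach_weight2_birth m j : expect (pa_law m j) (attach_weight2 j) = 2.
Proof.
  rewrite <- (Rmult_1_r 2), <- (pa_law_mass m j), <- expect_scal.
  apply (expect_ext_supported _ _ _ _ (supported_pa_law m j)).
  intros E HE. unfold attach_weight2, attach_weight. rewrite (outdeg_newest _ _ _ HE). simpl. ring.
Qed.

Lemma expect_attach_weight_closed m n j : (j <= n)%nat ->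
  expect (pa_law m n) (attach_weight j) =
  Gamma (INR n + 1) * Gamma (INR j + 1 / (INR m + 1))
  / (Gamma (INR n + 1 / (INR m + 1)) * Gamma (INR j + 1)).
Proof.
  intros Hjn. assert (Ha : 0 < 1 / (INR m + 1)) by (pose proof (pos_INR m); apply Rdiv_lt_0_compat; lra).
  rewrite (Gamma_ratio_telescope (fun k => expect (pa_law m k) (attach_weight j)) 1 _ j Rlt_0_1 Ha)
    by (auto; intros; now apply expect_attach_weight_succ).
  now rewrite expect_attach_weight_birth, Rmult_1_l.
Qed.

Lemma expect_attach_weight2_closed m n j : (j <= n)%nat ->
  expect (pa_law m n) (attach_weight2 j) =
  2 * (INR n + 1 / (INR m + 1)) / (INR j + 1 / (INR m + 1))
  * (Gamma (INR n + 1) * Gamma (INR j + 2 / (INR m + 1))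
     / (Gamma (INR n + 2 / (INR m + 1)) * Gamma (INR j + 1))).
Proof.
  intros Hjn. pose proof (pos_INR m). pose proof (pos_INR n). pose proof (pos_INR j).
  assert (Ha : 0 < 1 / (INR m + 1)) by (apply Rdiv_lt_0_compat; lra).
  assert (Hb : 0 < 2 / (INR m + 1)) by (apply Rdiv_lt_0_compat; lra).
  pose proof (Gamma_ratio_telescope
    (fun k => expect (pa_law m k) (attach_weight2 j) / (INR k + 1 / (INR m + 1))) 1 _ j Rlt_0_1 Hb
    ltac:(intros; now apply expect_attach_weight2_succ) n Hjn) as Htel.
  simpl in Htel. rewrite expect_attach_weight2_birth in Htel.
  replace (expect (pa_law m n) (attach_weight2 j))
    with (expect (pa_law m n) (attach_weight2 j) / (INR n + 1 / (INR m + 1)) * (INR n + 1 / (INR m + 1)))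
    by (field; repeat split; nra).
  pose proof (Gamma_nat_pos _ n Hb). pose proof (Gamma_nat_pos 1 j Rlt_0_1).
  rewrite Htel. field. repeat split; nra.
Qed.

Lemma degree_attach_weight m n j E : (j <= n)%nat -> pa_shape m n 0 E ->
  INR (degree E j) = attach_weight j E - 1 + INR m * (1 - kdelta j 0).
Proof.
  intros Hjn HE. unfold degree, attach_weight.
  fold (outdeg E j) (indeg E j). rewrite (pa_shape_indeg _ _ _ _ HE), plus_INR, S_INR.
  unfold indeg_profile, kdelta. destruct (Nat.eqb j 0); [simpl; ring |].
  rewrite (proj2 (Nat.leb_le j n) Hjn). ring.
Qed.

Lemma mean_deg_attach_weight m n j : (j <= n)%nat ->
  mean_deg m n j = expect (pa_law m n) (attach_weight j) - 1 + INR m * (1 - kdelta j 0).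
Proof.
  intros Hjn. set (c := -1 + INR m * (1 - kdelta j 0)). unfold mean_deg.
  rewrite (expect_ext_supported _ _ _ (fun E => attach_weight j E + c * 1) (supported_pa_law m n)).
  - rewrite expect_plus, expect_scal, pa_law_mass. unfold c. ring.
  - intros E HE. rewrite (degree_attach_weight m n j E Hjn HE). unfold c. ring.
Qed.

Lemma var_deg_attach_weight m n j : (j <= n)%nat ->
  var_deg m n j =
  expect (pa_law m n) (attach_weight2 j) - expect (pa_law m n) (attach_weight j)
  - expect (pa_law m n) (attach_weight j) ^ 2.
Proof.
  intros Hjn. unfold var_deg. rewrite mean_deg_attach_weight by exact Hjn.
  set (mu := expect (pa_law m n) (attach_weight j)).
  rewrite (expect_ext_supported _ _ _
             (fun E => attach_weight2 j E + (- (1 + 2 * mu) * attach_weight j E + mu ^ 2 * 1))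
             (supported_pa_law m n)).
  - rewrite !expect_plus, !expect_scal, pa_law_mass. unfold mu. ring.
  - intros E HE. rewrite (degree_attach_weight m n j E Hjn HE). unfold attach_weight2. ring.
Qed.

Theorem theorem4 (m n j : nat) (hm : (1 <= m)%nat) (hjn : (j <= n)%nat) :
  let a := 1 / INR (m + 1) in
  let b := 2 / INR (m + 1) in
  let N := INR n in let J := INR j in let M := INR m in
  mean_deg m n j =
    Gamma (N + 1) * Gamma (J + a) / (Gamma (N + a) * Gamma (J + 1))
    - 1 + M * (1 - kdelta j 0)
  /\
  var_deg m n j =
    Gamma (N + 1) /
      (((M + 1) * J + 1) * (Gamma (N + a)) ^ 2 * (Gamma (J + 1)) ^ 2 * Gamma (N + b))
    * ( 2 * ((M + 1) * N + 1) * Gamma (J + 1) * (Gamma (N + a)) ^ 2 * Gamma (J + b)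
        - ((M + 1) * J + 1) *
          ( Gamma (N + 1) * Gamma (N + b) * (Gamma (J + a)) ^ 2
            + Gamma (N + b) * Gamma (N + a) * Gamma (J + 1) * Gamma (J + a))).
Proof.
  cbv zeta. rewrite plus_INR. change (INR 1) with 1.
  rewrite var_deg_attach_weight, mean_deg_attach_weight,
    expect_attach_weight2_closed, expect_attach_weight_closed by exact hjn.
  pose proof (pos_INR m). pose proof (pos_INR n). pose proof (pos_INR j).
  assert (Ha : 0 < 1 / (INR m + 1)) by (apply Rdiv_lt_0_compat; lra).
  assert (Hb : 0 < 2 / (INR m + 1)) by (apply Rdiv_lt_0_compat; lra).
  pose proof (Gamma_nat_pos 1 n Rlt_0_1). pose proof (Gamma_nat_pos 1 j Rlt_0_1).
  pose proof (Gamma_nat_pos _ n Ha). pose proof (Gamma_nat_pos _ j Ha).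
  pose proof (Gamma_nat_pos _ n Hb). pose proof (Gamma_nat_pos _ j Hb).
  split; [ring |].
  field. repeat split; try lra; nra.
Qed.
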